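(* Let $q$ be a prime power, $n\ge 1$, and $L_q^n$ the lattice of all subspaces of $\mathbb{F}_q^n$ ordered by inclusion and ranked by dimension. Then $\mathcal{M}(L_q^n,-1)=0$.
   Context: For a finite ranked poset $\mathcal{P}$, $\mathrm{rk}(\mathcal{P})$ is the maximum rank and $\rho(x,y,z)=3\,\mathrm{rk}(\mathcal{P})-\mathrm{rk}(x)-\mathrm{rk}(y)-\mathrm{rk}(z)$. Let $\delta_3(x,y,z)=1$ if $x=y=z$ and $0$ otherwise, and $J$ the unique integer-valued function on triples $x\le y\le z$ with $\sum_{x\le a\le y\le b\le z}J(a,y,b)=\delta_3(x,y,z)$ for all $x\le y\le z$. Then $\mathcal{M}(\mathcal{P},t)=\sum_{x\le y\le z}J(x,y,z)\,t^{\rho(x,y,z)}$. *)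

From HB Require Import structures.
From mathcomp Require Import all_boot all_order all_algebra all_field.
Set Implicit Arguments. Unset Strict Implicit. Unset Printing Implicit Defensive.
Import GRing.Theory Num.Theory.
Local Open Scope ring_scope.

Section RankedPoset.
Variables (T : finType) (le : rel T) (rk : T -> nat).

Definition rkmax : nat := (\max_(x : T) rk x)%N.

Definition rho (x y z : T) : nat := (3 * rkmax - (rk x + rk y + rk z))%N.

Definition delta3 (x y z : T) : int := if (x == y) && (y == z) then 1 else 0.

Definition J_spec (J : T -> T -> T -> int) : Prop :=
  forall x y z, le x y -> le y z ->
    \sum_(a | le x a && le a y) \sum_(b | le y b && le b z) J a y b
    = delta3 x y z.

Definition Mpoly (J : T -> T -> T -> int) : {poly int} :=
  \sum_(x : T) \sum_(y : T) \sum_(z : T | le x y && le y z)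
     (J x y z)%:P * 'X^(rho x y z).
End RankedPoset.

(* The lattice L_q^n of subspaces of F^n (F a finite field with q elements),
   each subspace represented by its canonical generating matrix <<A>>. *)
Definition subspace (F : finFieldType) (n : nat) :=
  {A : 'M[F]_n | <<A>>%MS == A}.

Definition subspace_le (F : finFieldType) (n : nat) : rel (subspace F n) :=
  fun U V => (val U <= val V)%MS.

Definition subspace_dim (F : finFieldType) (n : nat) (U : subspace F n) : nat :=
  \rank (val U).

From mathcomp Require Import all_boot all_algebra all_field ring zify.
From Stdlib Require Import FunctionalExtensionality.
Set Implicit Arguments. Unset Strict Implicit. Unset Printing Implicit Defensive.
Import GRing.Theory Num.Theory.
Local Open Scope ring_scope.

(* Solving the defining system gives J(x,y,z) = mu(x,y) mu(y,z), with mu the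
   Moebius function, so with s = (-1)^rank and D = diag(s) the value
   M(L,-1) is, up to a global sign, the sum of all entries of D mu D mu D.
   In the subspace lattice every interval [X,Z] of odd length has vanishing
   signed count: Y |-> X + (Y /\ W)^perp, for a complement W of X in Z, is a
   rank-parity reversing involution of [X,Z].  This says that zeta commutes
   with D zeta D; passing to inverses, mu commutes with D mu D, and the sum
   becomes that of the entries of mu D mu, namely
   sum_y (sum_x mu(x,y)) s(y) (sum_z mu(y,z)) = s(0) [0 = 1] = 0. *)

Section FunMatrix.
Variables (R : pzRingType) (T : finType).

Definition mulfm (A B : T -> T -> R) : T -> T -> R :=
  fun x z => \sum_y A x y * B y z.

Definition fm1 : T -> T -> R := fun x z => (x == z)%:R.

Definition diagfm (d : T -> R) : T -> T -> R := fun x z => d x * (x == z)%:R.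

Lemma sum_natr_mull (P : pred T) (f : T -> R) :
  \sum_y (P y)%:R * f y = \sum_(y | P y) f y.
Proof. by rewrite [RHS]big_mkcond; apply: eq_bigr => y _; rewrite mulr_natl mulrb. Qed.

Lemma sum_natr_mulr (P : pred T) (f : T -> R) :
  \sum_y f y * (P y)%:R = \sum_(y | P y) f y.
Proof. by rewrite [RHS]big_mkcond; apply: eq_bigr => y _; rewrite mulr_natr mulrb. Qed.

Lemma sum_eq_mull (f : T -> R) x : \sum_y (x == y)%:R * f y = f x.
Proof.
rewrite sum_natr_mull (big_pred1 x) // => y; exact: eq_sym.
Qed.

Lemma sum_eq_mulr (f : T -> R) x : \sum_y f y * (y == x)%:R = f x.
Proof. by rewrite sum_natr_mulr big_pred1_eq. Qed.

Lemma mulfmA A B C : mulfm (mulfm A B) C = mulfm A (mulfm B C).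
Proof.
do 2!apply: functional_extensionality => ?; rewrite /mulfm.
under eq_bigr do rewrite mulr_suml.
rewrite exchange_big; apply: eq_bigr => y _; rewrite mulr_sumr.
by apply: eq_bigr => w _; rewrite mulrA.
Qed.

Lemma mulfm1 A : mulfm A fm1 = A.
Proof. by do 2!apply: functional_extensionality => ?; apply: sum_eq_mulr. Qed.

Lemma mul1fm A : mulfm fm1 A = A.
Proof. by do 2!apply: functional_extensionality => ?; apply: sum_eq_mull. Qed.

Lemma mul_diagfm d A x z : mulfm (diagfm d) A x z = d x * A x z.
Proof.
rewrite /mulfm /diagfm -(sum_eq_mull (fun y => d y * A y z)); apply: eq_bigr => y _.
by case: eqP => [->|_]; rewrite ?(mulr1, mul1r, mulr0, mul0r).
Qed.

Lemma mulfm_diag A d x z : mulfm A (diagfm d) x z = A x z * d z.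
Proof.
rewrite /mulfm /diagfm -(sum_eq_mulr (fun y => A x y * d y)); apply: eq_bigr => y _.
by case: eqP => [->|_]; rewrite ?(mulr1, mul1r, mulr0, mul0r).
Qed.

Lemma diagfm_invol d : (forall x, d x * d x = 1) -> mulfm (diagfm d) (diagfm d) = fm1.
Proof.
move=> dd; apply: functional_extensionality => x; apply: functional_extensionality => z.
by rewrite mul_diagfm /diagfm /fm1 mulrA dd mul1r.
Qed.

Lemma commute_fm_inv A B C :
    mulfm A B = fm1 -> mulfm B A = fm1 -> mulfm A C = mulfm C A ->
  mulfm B C = mulfm C B.
Proof.
move=> AB BA AC.
rewrite -[mulfm B C]mulfm1 -AB mulfmA -(mulfmA C) -AC.
by rewrite (mulfmA A) -(mulfmA B) BA mul1fm.
Qed.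

End FunMatrix.

Arguments fm1 {R T}.

Section Incidence.
Variables (T : finType) (le : rel T).
Hypotheses (le_refl : reflexive le) (le_anti : antisymmetric le)
  (le_trans : transitive le).

Definition zeta : T -> T -> int := fun x y => (le x y)%:R.

Lemma zetaM x y z : zeta x y * zeta y z = (le x y && le y z)%:R.
Proof. by rewrite -natrM mulnb. Qed.

Lemma zetaM_sym x y : zeta x y * zeta y x = (x == y)%:R.
Proof.
rewrite zetaM; suff -> : le x y && le y x = (x == y) by [].
by apply/idP/eqP => [/le_anti //|->]; rewrite le_refl.
Qed.

Lemma zetaM_eq0 x y z : ~~ le x z -> zeta x y * zeta y z = 0.
Proof.
by move=> xz; rewrite zetaM; case: andP => // [[/le_trans yz /yz]]; rewrite (negPf xz).
Qed.

Variables (J : T -> T -> T -> int) (hJ : J_spec le J).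

Definition Jslice y : T -> T -> int := fun a b => zeta a y * zeta y b * J a y b.

Definition unitfm y : T -> T -> int := fun a b => (a == y)%:R * (b == y)%:R.

Lemma zeta_Jslice_zeta y : mulfm (mulfm zeta (Jslice y)) zeta = unitfm y.
Proof.
apply: functional_extensionality => x; apply: functional_extensionality => z.
transitivity (\sum_a \sum_b (zeta x a * zeta a y) * (zeta y b * zeta b z) * J a y b).
  rewrite /mulfm exchange_big; apply: eq_bigr => a _; rewrite mulr_suml.
  by apply: eq_bigr => b _; rewrite /Jslice; ring.
have [xy|xy] := boolP (le x y); last first.
  rewrite big1 => [|a _]; last by rewrite big1 // => b _; rewrite zetaM_eq0 ?mul0r.
  rewrite /unitfm; case: eqP => [e|_]; last by rewrite mul0r.
  by rewrite e le_refl in xy.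
have [yz|yz] := boolP (le y z); last first.
  rewrite big1 => [|a _]; last by rewrite big1 // => b _; rewrite (zetaM_eq0 b) ?mulr0 ?mul0r.
  rewrite /unitfm; case: (z =P y) => [e|_]; last by rewrite mulr0.
  by rewrite e le_refl in yz.
under eq_bigr do under eq_bigr do rewrite !zetaM -mulrA.
under eq_bigr do rewrite -mulr_sumr sum_natr_mull.
rewrite sum_natr_mull (hJ xy yz) /delta3 /unitfm [z == y]eq_sym.
by case: (x == y); case: (y == z).
Qed.

Definition mu : T -> T -> int := fun x y => zeta x y * J x y y.

Lemma Jslice_zeta_diag x y : mulfm (Jslice y) zeta x y = mu x y.
Proof.
rewrite /mulfm /mu -(sum_eq_mull (fun b => zeta x y * J x y b) y).
by apply: eq_bigr => b _; rewrite /Jslice -zetaM_sym; ring.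
Qed.

Lemma zeta_Jslice_diag y z : mulfm zeta (Jslice y) y z = zeta y z * J y y z.
Proof.
rewrite /mulfm -(sum_eq_mull (fun a => zeta y z * J a y z) y).
by apply: eq_bigr => a _; rewrite /Jslice -zetaM_sym; ring.
Qed.

Lemma zeta_mu : mulfm zeta mu = fm1.
Proof.
apply: functional_extensionality => x; apply: functional_extensionality => y.
have := congr1 (fun M => M x y) (zeta_Jslice_zeta y).
rewrite mulfmA /= /unitfm /fm1 eqxx mulr1 => <-.
by apply: eq_bigr => a _; rewrite Jslice_zeta_diag.
Qed.

Lemma mu_zeta : mulfm mu zeta = fm1.
Proof.
pose mu' y z := zeta y z * J y y z.
have mu'_zeta : mulfm mu' zeta = fm1.
  apply: functional_extensionality => y; apply: functional_extensionality => z.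
  have := congr1 (fun M => M y z) (zeta_Jslice_zeta y).
  rewrite /= /unitfm /fm1 eqxx mul1r eq_sym => <-.
  by apply: eq_bigr => b _; rewrite zeta_Jslice_diag.
suff <- : mu' = mu by [].
by rewrite -[mu']mulfm1 -zeta_mu -mulfmA mu'_zeta mul1fm.
Qed.

Lemma J_factor x y z : le x y -> le y z -> J x y z = mu x y * mu y z.
Proof.
move=> xy yz.
have : Jslice y = mulfm (mulfm mu (unitfm y)) mu.
  by rewrite -zeta_Jslice_zeta !mulfmA zeta_mu mulfm1 -mulfmA mu_zeta mul1fm.
move/(congr1 (fun M => M x z)); rewrite /Jslice /zeta xy yz /= !mul1r => ->.
rewrite /mulfm -(sum_eq_mulr (fun b => mu x y * mu b z) y).
apply: eq_bigr => b _; rewrite /unitfm.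
under eq_bigr do rewrite mulrA.
by rewrite -mulr_suml sum_eq_mulr; ring.
Qed.

Lemma mu_eq0 x y : ~~ le x y -> mu x y = 0.
Proof. by rewrite /mu /zeta => /negPf ->; rewrite mul0r. Qed.

Variables (bot top : T).
Hypotheses (le_bot : forall x, le bot x) (le_top : forall x, le x top).

Lemma sum_mu_col y : \sum_x mu x y = (bot == y)%:R.
Proof.
have := congr1 (fun M => M bot y) zeta_mu; rewrite /= /mulfm /fm1 => <-.
by apply: eq_bigr => x _; rewrite /zeta le_bot mul1r.
Qed.

Lemma sum_mu_row x : \sum_z mu x z = (x == top)%:R.
Proof.
have := congr1 (fun M => M x top) mu_zeta; rewrite /= /mulfm /fm1 => <-.
by apply: eq_bigr => z _; rewrite /zeta le_top mulr1.
Qed.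

Variable rk : T -> nat.
Hypothesis odd_interval_sum : forall x z, le x z -> odd (rk x + rk z) ->
  \sum_(y | le x y && le y z) (-1) ^+ rk y = 0 :> int.

Let sgn x : int := (-1) ^+ rk x.
Local Notation D := (diagfm sgn).

Lemma sgn_sqr x : sgn x * sgn x = 1.
Proof. by rewrite -exprD -signr_odd addnn odd_double. Qed.

Lemma zeta_sgn_interval x z :
  \sum_y zeta x y * (sgn y * zeta y z) = \sum_(y | le x y && le y z) sgn y.
Proof.
rewrite -[RHS]sum_natr_mull; apply: eq_bigr => y _.
by rewrite -zetaM; ring.
Qed.

Lemma zeta_commute_twist :
  mulfm zeta (mulfm (mulfm D zeta) D) = mulfm (mulfm (mulfm D zeta) D) zeta.
Proof.
apply: functional_extensionality => x; apply: functional_extensionality => z.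
have -> : mulfm zeta (mulfm (mulfm D zeta) D) x z =
          (\sum_(y | le x y && le y z) sgn y) * sgn z.
  rewrite -zeta_sgn_interval mulr_suml; apply: eq_bigr => y _.
  by rewrite mulfm_diag mul_diagfm mulrA.
have -> : mulfm (mulfm (mulfm D zeta) D) zeta x z =
          sgn x * (\sum_(y | le x y && le y z) sgn y).
  rewrite -zeta_sgn_interval mulr_sumr; apply: eq_bigr => y _.
  by rewrite mulfm_diag mul_diagfm; ring.
have [xz|xz] := boolP (le x z); last first.
  rewrite big_pred0 ?mulr0 ?mul0r // => y.
  by apply/negbTE; apply: contra xz => /andP[/le_trans]; apply.
have [odd_xz|even_xz] := boolP (odd (rk x + rk z)).
  by rewrite odd_interval_sum ?mulr0 ?mul0r.
rewrite mulrC; congr (_ * _); rewrite /sgn -signr_odd -[in RHS]signr_odd.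
by move: even_xz; rewrite oddD; case: (odd (rk x)); case: (odd (rk z)).
Qed.

(* D mu D is the inverse of D zeta D, which commutes with zeta. *)
Lemma mu_commute_twist :
  mulfm (mulfm mu D) mu = mulfm (mulfm (mulfm (mulfm D mu) D) mu) D.
Proof.
have DD : mulfm D D = fm1 by apply: diagfm_invol; apply: sgn_sqr.
have twist_inv A B : mulfm A B = fm1 ->
    mulfm (mulfm (mulfm D A) D) (mulfm (mulfm D B) D) = fm1.
  by move=> AB; rewrite !mulfmA -(mulfmA D D) DD mul1fm -(mulfmA A) AB mul1fm DD.
have Wzeta := commute_fm_inv (twist_inv _ _ zeta_mu) (twist_inv _ _ mu_zeta)
  (esym zeta_commute_twist).
have muW := commute_fm_inv zeta_mu mu_zeta (esym Wzeta).
by rewrite -muW -!mulfmA [RHS]mulfmA DD mulfm1.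
Qed.

Lemma sum_J_sgn :
  bot != top ->
  \sum_x \sum_y \sum_(z | le x y && le y z) J x y z * (sgn x * sgn y * sgn z) = 0.
Proof.
move=> bot_top.
transitivity (\sum_x \sum_z mulfm (mulfm (mulfm (mulfm D mu) D) mu) D x z).
  apply: eq_bigr => x _; under eq_bigr do rewrite big_mkcond /=.
  rewrite exchange_big; apply: eq_bigr => z _.
  rewrite mulfm_diag {1}/mulfm mulr_suml; apply: eq_bigr => y _.
  rewrite mulfm_diag mul_diagfm.
  case: ifP => [/andP[xy yz]|]; first by rewrite J_factor //; ring.
  by move/negbT/nandP => [/mu_eq0|/mu_eq0] ->; ring.
rewrite -mu_commute_twist.
transitivity (\sum_y (\sum_x mu x y) * sgn y * (\sum_z mu y z)).
  symmetry; under eq_bigr do rewrite mulr_suml mulr_suml.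
  rewrite exchange_big; apply: eq_bigr => x _.
  under eq_bigr do rewrite mulr_sumr.
  rewrite exchange_big; apply: eq_bigr => z _.
  by rewrite {1}/mulfm; apply: eq_bigr => y _; rewrite mulfm_diag.
rewrite big1 // => y _; rewrite sum_mu_col sum_mu_row.
rewrite -mulrA mulr_natl mulrb; case: eqP => // <-.
by rewrite (negPf bot_top) mulr0.
Qed.
End Incidence.

Lemma horner_Mpoly_N1 (T : finType) (le : rel T) (rk : T -> nat)
    (J : T -> T -> T -> int) :
  (Mpoly le rk J).[-1] = (-1) ^+ (3 * rkmax rk) *
    \sum_x \sum_y \sum_(z | le x y && le y z)
      J x y z * ((-1) ^+ rk x * (-1) ^+ rk y * (-1) ^+ rk z).
Proof.
have sgn_rho x y z : (-1) ^+ rho rk x y z = (-1) ^+ (3 * rkmax rk) *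
    ((-1) ^+ rk x * (-1) ^+ rk y * (-1) ^+ rk z) :> int.
  have rk_max u : (rk u <= rkmax rk)%N by apply: leq_bigmax.
  rewrite /rho exprB ?unitrN1 ?invr_sign ?exprD //.
  by have := rk_max x; have := rk_max y; have := rk_max z; lia.
rewrite /Mpoly !(horner_sum, mulr_sumr); apply: eq_bigr => x _.
rewrite !(horner_sum, mulr_sumr); apply: eq_bigr => y _.
rewrite !(horner_sum, mulr_sumr); apply: eq_bigr => z _.
by rewrite hornerCM hornerXn sgn_rho mulrCA.
Qed.

Lemma sum_involution_eq0 (R : numDomainType) (I : finType) (P : pred I)
    (f : I -> I) (F : I -> R) :
    (forall i, P i -> P (f i)) -> (forall i, P i -> f (f i) = i) ->
    (forall i, P i -> F (f i) = - F i) ->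
  \sum_(i | P i) F i = 0.
Proof.
move=> Pf fK Ff; set S := (X in X = 0).
have S_opp : S = - S.
  rewrite {1}/S (reindex_onto f f fK) -sumrN; apply: eq_big => [i|i /andP[Pfi /eqP ffi]].
    apply/andP/idP => [[Pfi /eqP <-]|Pi]; first exact: Pf.
    by rewrite Pf // fK ?eqxx.
  by rewrite Ff // -ffi Pf.
by apply/eqP; move/eqP: S_opp; rewrite -addr_eq0 -mulr2n mulrn_eq0.
Qed.

Section Perp.
Variables (F : fieldType) (k : nat).

Definition perp m (A : 'M[F]_(m, k)) : 'M_k := kermx A^T.

Lemma perpS m1 m2 (A : 'M[F]_(m1, k)) (B : 'M[F]_(m2, k)) :
  (A <= B)%MS -> (perp B <= perp A)%MS.
Proof.
case/submxP=> D ->; apply/sub_kermxP.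
by rewrite trmx_mul mulmxA mulmx_ker mul0mx.
Qed.

Lemma perp_eqmx m1 m2 (A : 'M[F]_(m1, k)) (B : 'M[F]_(m2, k)) :
  (A :=: B)%MS -> (perp A :=: perp B)%MS.
Proof. by move=> eqAB; apply/eqmxP; rewrite !perpS // eqAB. Qed.

Lemma mxrank_perp m (A : 'M[F]_(m, k)) : \rank (perp A) = (k - \rank A)%N.
Proof. by rewrite mxrank_ker mxrank_tr. Qed.

Lemma perpK m (A : 'M[F]_(m, k)) : (perp (perp A) :=: A)%MS.
Proof.
have sA : (A <= perp (perp A))%MS.
  by apply/sub_kermxP; apply: trmx_inj; rewrite trmx_mul trmxK mulmx_ker trmx0.
apply: eqmx_sym; apply/eqmxP.
rewrite -(mxrank_leqif_eq sA).2 !mxrank_perp.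
by rewrite subKn ?rank_leq_col.
Qed.

End Perp.

Section IntervalFlip.
Variables (F : fieldType) (n : nat) (X Z : 'M[F]_n).
Hypothesis sXZ : (X <= Z)%MS.

Let W := (Z :\: X)%MS.
Let B := row_base W.

Definition coord_compl (Y : 'M[F]_n) := (Y :&: W)%MS *m pinvmx B.

(* The orthogonal complement is taken in coordinates w.r.t. the basis B of W. *)
Definition flip (Y : 'M[F]_n) := (X + perp (coord_compl Y) *m B)%MS.

Lemma compl_disjoint m (A : 'M[F]_(m, n)) : (A <= W)%MS -> (X :&: A)%MS = 0.
Proof.
move=> sAW; apply/eqP; rewrite -submx0 -(capmx_diff Z X) capmxC.
by rewrite capmxS.
Qed.

Lemma interval_compl_eq (Y : 'M[F]_n) :
  (X <= Y)%MS -> (Y <= Z)%MS -> (X + (Y :&: W) :=: Y)%MS.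
Proof.
move=> sXY sYZ; rewrite capmxC.
apply: eqmx_trans (matrix_modl W sXY) _.
have XWZ : (X + W :=: Z)%MS.
  rewrite addsmxC; apply: eqmx_trans (addsmx_diff_cap_eq Z X).
  by apply: adds_eqmx; [exact: eqmx_refl | apply: eqmx_sym; apply/capmx_idPr].
by apply: eqmx_trans (cap_eqmx XWZ (eqmx_refl Y)) _; apply/capmx_idPr.
Qed.

Lemma mxrank_interval (Y : 'M[F]_n) : (X <= Y)%MS -> (Y <= Z)%MS ->
  \rank Y = (\rank X + \rank (Y :&: W))%N.
Proof.
move=> sXY sYZ; rewrite -{1}(interval_compl_eq sXY sYZ) mxrank_disjoint_sum //.
by apply: compl_disjoint; apply: capmxSr.
Qed.

Lemma flip_compl_sub (Y : 'M[F]_n) : (perp (coord_compl Y) *m B <= W)%MS.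
Proof. by rewrite -(eq_row_base W) submxMl. Qed.

Lemma mxrank_flip (Y : 'M[F]_n) :
  \rank (flip Y) = (\rank X + (\rank W - \rank (Y :&: W)))%N.
Proof.
rewrite /flip mxrank_disjoint_sum ?compl_disjoint ?flip_compl_sub //.
rewrite mxrankMfree ?row_base_free // mxrank_perp; congr (_ + (_ - _))%N.
apply/eqP; rewrite eqn_leq mxrankM_maxl /=.
by rewrite -{1}(mulmxKpV (_ : (Y :&: W <= B)%MS)) ?mxrankM_maxl // eq_row_base capmxSr.
Qed.

Lemma flip_ge (Y : 'M[F]_n) : (X <= flip Y)%MS.
Proof. exact: addsmxSl. Qed.

Lemma flip_le (Y : 'M[F]_n) : (flip Y <= Z)%MS.
Proof. by rewrite addsmx_sub sXZ (submx_trans (flip_compl_sub Y)) ?diffmxSl. Qed.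

Lemma flip_eqmx (Y1 Y2 : 'M[F]_n) : (Y1 :=: Y2)%MS -> (flip Y1 :=: flip Y2)%MS.
Proof.
move=> eqY; apply: adds_eqmx; first exact: eqmx_refl.
by apply/eqmxMr/perp_eqmx/eqmxMr/cap_eqmx.
Qed.

Lemma mxrank_flipD (Y : 'M[F]_n) : (X <= Y)%MS -> (Y <= Z)%MS ->
  (\rank (flip Y) + \rank Y = \rank X + \rank Z)%N.
Proof.
move=> sXY sYZ; have /capmx_idPr ZW : (W <= Z)%MS by apply: diffmxSl.
rewrite mxrank_flip (mxrank_interval sXY sYZ) (mxrank_interval sXZ (submx_refl Z)) ZW.
have : (\rank (Y :&: W) <= \rank W)%N by apply/mxrankS/capmxSr.
lia.
Qed.

Lemma flipK (Y : 'M[F]_n) : (X <= Y)%MS -> (Y <= Z)%MS -> (flip (flip Y) :=: Y)%MS.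
Proof.
move=> sXY sYZ.
have capW : (flip Y :&: W :=: perp (coord_compl Y) *m B)%MS.
  rewrite /flip addsmxC.
  apply: eqmx_trans (eqmx_sym (matrix_modl _ (flip_compl_sub Y))) _.
  by rewrite compl_disjoint ?capmxSr //; exact: addsmx0.
have coord_flip : (coord_compl (flip Y) :=: perp (coord_compl Y))%MS.
  apply: eqmx_trans (eqmxMr _ capW) _.
  suff -> : perp (coord_compl Y) *m B *m pinvmx B = perp (coord_compl Y) by [].
  by apply: (row_free_inj (row_base_free W)); rewrite mulmxKpV // submxMl.
apply: eqmx_trans _ (interval_compl_eq sXY sYZ).
apply: adds_eqmx; first exact: eqmx_refl.
apply: eqmx_trans (eqmxMr _ (eqmx_trans (perp_eqmx coord_flip) (perpK _))) _.
by rewrite mulmxKpV ?eq_row_base ?capmxSr //; exact: eqmx_refl.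
Qed.
End IntervalFlip.

Lemma sign_odd_addn a b : odd (a + b) -> (-1) ^+ a = - (-1) ^+ b :> int.
Proof.
by rewrite -signr_odd -[in RHS]signr_odd oddD => /addbP <-; rewrite signrN opprK.
Qed.

Section SubspaceLattice.
Variables (F : finFieldType) (n : nat).
Local Notation le := (@subspace_le F n).
Local Notation dim := (@subspace_dim F n).

Definition subspace_of (A : 'M[F]_n) : subspace F n :=
  exist _ <<A>>%MS (introT eqP (genmx_id A)).

Lemma subspace_le_refl : reflexive le.
Proof. by move=> U; apply: submx_refl. Qed.

Lemma subspace_le_anti : antisymmetric le.
Proof.
move=> U V /andP[sUV sVU]; apply: val_inj.
by rewrite -(eqP (valP U)) -(eqP (valP V)); apply/eq_genmx/eqmxP/andP.
Qed.

Lemma subspace_le_trans : transitive le.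
Proof. by move=> V U W; apply: submx_trans. Qed.

Lemma subspace_interval_sum (X Z : subspace F n) :
    le X Z -> odd (dim X + dim Z) ->
  \sum_(Y | le X Y && le Y Z) (-1) ^+ dim Y = 0 :> int.
Proof.
rewrite /subspace_le /subspace_dim => sXZ odd_XZ.
pose f (Y : subspace F n) := subspace_of (flip (val X) (val Z) (val Y)).
apply: (@sum_involution_eq0 _ _ _ f) => Y /andP[sXY sYZ].
- by rewrite /= !genmxE flip_ge flip_le.
- apply: val_inj; rewrite /= -[RHS](eqP (valP Y)); apply: eq_genmx.
  exact: eqmx_trans (flip_eqmx _ _ (genmxE _)) (flipK sXZ sXY sYZ).
- apply: sign_odd_addn; rewrite /= genmxE.
  by rewrite mxrank_flipD.
Qed.

End SubspaceLattice.

Theorem proposition6p15 (F : finFieldType) (n : nat) (hn : (0 < n)%N)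
  (J : subspace F n -> subspace F n -> subspace F n -> int)
  (hJ : J_spec (@subspace_le F n) J) :
  (Mpoly (@subspace_le F n) (@subspace_dim F n) J).[-1] = 0.
Proof.
pose bot := subspace_of (0 : 'M[F]_n).
pose top := subspace_of (1%:M : 'M[F]_n).
have le_bot U : subspace_le bot U by rewrite /subspace_le genmxE sub0mx.
have le_top U : subspace_le U top by rewrite /subspace_le genmxE submx1.
have bot_top : bot != top.
  apply/eqP => /(congr1 (@subspace_dim F n)).
  by rewrite /subspace_dim !genmxE mxrank0 mxrank1 => n0; rewrite -n0 in hn.
rewrite horner_Mpoly_N1 (sum_J_sgn (@subspace_le_refl F n) (@subspace_le_anti F n)
  (@subspace_le_trans F n) hJ le_bot le_top (@subspace_interval_sum F n) bot_top).
by rewrite mulr0.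
Qed.
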